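(* Let $\{\hat{\mathcal Z}_t\}$ be Banach spaces, $\mathfrak F$ a class of uniformly bounded measurable functions, and $\varepsilon_t,\delta_t>0$. Suppose $\hat\sigma_t:\mathcal H_t\to\hat{\mathcal Z}_t$, $\hat P_t:\hat{\mathcal Z}_t\times\mathcal A\to\Delta(\hat{\mathcal Z}_{t+1})$, $\hat r_t:\hat{\mathcal Z}_t\times\mathcal A\to\mathbb R$ ($t=1,\dots,T$) satisfy (AP1) for all $t$, all realizations $h_t$ of $H_t$ and all $a_t\in\mathcal A$: $\big|\mathbb E[R_t\mid H_t=h_t,A_t=a_t]-\hat r_t(\hat\sigma_t(h_t),a_t)\big|\le\varepsilon_t$; (AP2) for all $t,h_t,a_t$: with $\mu_t(B)=\mathbb P(\hat\sigma_{t+1}(H_{t+1})\in B\mid H_t=h_t,A_t=a_t)$ and $\nu_t(B)=\hat P_t(B\mid\hat\sigma_t(h_t),a_t)$, $d_{\mathfrak F}(\mu_t,\nu_t)\le\delta_t$. Let $\hat\pi^\#=(\hat\pi^\#_1,\dots,\hat\pi^\#_T)$ with $\hat\pi^\#_t:\hat{\mathcal Z}_t\to\Delta(\mathcal A)$ be an arbitrary stochastic policy. Define $\hat V^{\hat\pi^\#}_{T+1}\equiv0$ and for $t=T,\dots,1$: $\hat Q^{\hat\pi^\#}_t(\hat z,a)=\hat r_t(\hat z,a)+\int\hat V^{\hat\pi^\#}_{t+1}(\hat z')\,\hat P_t(d\hat z'\mid\hat z,a)$ and $\hat V^{\hat\pi^\#}_t(\hat z)=\sum_{a\in\mathcal A}\hat\pi^\#_t(a\mid\hat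 z)\hat Q^{\hat\pi^\#}_t(\hat z,a)$. Define the policy $\pi^\#_t=\hat\pi^\#_t\circ\hat\sigma_t$. Let $\alpha^\#_{T+1}=0$ and $\alpha^\#_t=\varepsilon_t+\rho_{\mathfrak F}(\hat V^{\hat\pi^\#}_{t+1})\delta_t+\alpha^\#_{t+1}$, so $\alpha^\#_t=\varepsilon_t+\sum_{\tau=t+1}^T\big[\rho_{\mathfrak F}(\hat V^{\hat\pi^\#}_\tau)\delta_{\tau-1}+\varepsilon_\tau\big]$. Then for every $t$, every realization $h_t$ of $H_t$ and every $a_t\in\mathcal A$: $|Q^{\pi^\#}_t(h_t,a_t)-\hat Q^{\hat\pi^\#}_t(\hat\sigma_t(h_t),a_t)|\le\alpha^\#_t$ and $|V^{\pi^\#}_t(h_t)-\hat V^{\hat\pi^\#}_t(\hat\sigma_t(h_t))|\le\alpha^\#_t$.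
   Context: Setting: a stochastic input-output system over a finite horizon $t=1,\dots,T$. At each time $t$ an agent chooses an action $A_t$ in a finite action space $\mathcal A$; the system then produces an observation $Y_t$ in a measurable space $\mathcal Y$ and a real reward $R_t$. The history is $H_1=\emptyset$, $H_{t+1}=(H_t,Y_t,A_t)$, taking values in $\mathcal H_t$; the conditional law of $(Y_t,R_t)$ given $(H_t,A_t)$ is fixed by the system. A policy is $\pi=(\pi_t)$ with $\pi_t:\mathcal H_t\to\Delta(\mathcal A)$; its value functions are $V^\pi_{T+1}\equiv0$, $Q^\pi_t(h_t,a_t)=\mathbb E[R_t+V^\pi_{t+1}(H_{t+1})\mid H_t=h_t,A_t=a_t]$, $V^\pi_t(h_t)=\sum_a\pi_t(a\mid h_t)Q^\pi_t(h_t,a)$. Integral probability metric: $d_{\mathfrak F}(\mu,\nu)=\sup_{f\in\mathfrak F}|\int f\,d\mu-\int f\,d\nu|$. Minkowski functional: $\rho_{\mathfrak F}(f)=\inf\{\rho>0:\rho^{-1}f\in\mathfrak F\}$. *)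

From HB Require Import structures.
From mathcomp Require Import all_boot all_order all_algebra.
From mathcomp Require Import all_classical all_reals all_analysis.
Unset Printing Implicit Defensive.
Import Order.TTheory GRing.Theory Num.Theory.
Local Open Scope classical_set_scope.
Local Open Scope ring_scope.

(* Integral probability metric d_F(mu, nu) = sup_{f in F} |int f dmu - int f dnu|
   (extended-real valued; the sup of the empty class is -oo). *)
Definition ipm {d} {Z : measurableType d} {R : realType}
    (F : set (Z -> R)) (mu nu : set Z -> \bar R) : \bar R :=
  ereal_sup [set `| (\int[mu]_z (f z)%:E) - (\int[nu]_z (f z)%:E) |%E | f in F].

(* Minkowski functional rho_F(f) = inf { rho > 0 : rho^-1 f \in F }
   (extended-real valued; +oo if the set is empty). *)
Definition minkowski {d} {Z : measurableType d} {R : realType}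
    (F : set (Z -> R)) (f : Z -> R) : \bar R :=
  ereal_inf [set r%:E | r in [set r : R | 0 < r /\ F (fun z => r^-1 * f z)]].

Section TrueSystem.
(* Histories are sequences of (observation, action) pairs:
   H_1 = [::], H_{t+1} = rcons H_t (Y_t, A_t); a realization of H_t has size t-1.
   kappa t h a is the conditional law of (Y_t, R_t) given H_t = h, A_t = a.
   pi t h a is pi_t(a | h).  *)
Context {R : realType} {A : finType} {dY : measure_display} {Y : measurableType dY}
  (kappa : nat -> seq (Y * A) -> A -> probability (Y * R)%type R)
  (pi : nat -> seq (Y * A) -> A -> R).

(* Vpi k t h : value at time t when k steps remain (k = T + 1 - t). *)
Fixpoint Vpi (k t : nat) (h : seq (Y * A)) {struct k} : R :=
  match k with
  | 0 => 0
  | k'.+1 => \sum_(a : A) pi t h a *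
      fine (\int[kappa t h a]_yr ((yr : Y * R).2 + Vpi k' t.+1 (rcons h (yr.1, a)))%:E)
  end.

(* Q_t(h,a) = E[R_t + V_{t+1}(H_{t+1}) | H_t = h, A_t = a], k = T - t steps remain after t *)
Definition Qpi (k t : nat) (h : seq (Y * A)) (a : A) : R :=
  fine (\int[kappa t h a]_yr ((yr : Y * R).2 + Vpi k t.+1 (rcons h (yr.1, a)))%:E).
End TrueSystem.

Section ApproxSystem.
Context {R : realType} {A : finType} {dZ : nat -> measure_display}
  {Z : forall t, measurableType (dZ t)}
  (Phat : forall t, Z t -> A -> probability (Z t.+1) R)
  (rhat : forall t, Z t -> A -> R)
  (pihat : forall t, Z t -> A -> R).

Fixpoint Vhat (k : nat) : forall t, Z t -> R :=
  match k with
  | 0 => fun t _ => 0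
  | k'.+1 => fun t z => \sum_(a : A) pihat t z a *
      (rhat t z a + fine (\int[Phat t z a]_z' (Vhat k' t.+1 z')%:E))
  end.

Definition Qhat (k t : nat) (z : Z t) (a : A) : R :=
  rhat t z a + fine (\int[Phat t z a]_z' (Vhat k t.+1 z')%:E).

Fixpoint alphak (F : forall t, set (Z t -> R)) (eps delta : nat -> R)
    (k t : nat) {struct k} : \bar R :=
  match k with
  | 0 => 0%E
  | k'.+1 => ((eps t)%:E + minkowski (F t.+1) (Vhat k' t.+1) * (delta t)%:E
              + alphak F eps delta k' t.+1)%E
  end.
End ApproxSystem.

From Pilot Require Import Defs.
From HB Require Import structures.
From mathcomp Require Import all_boot all_order all_algebra.
From mathcomp Require Import all_classical all_reals all_analysis.
From mathcomp Require Import measurable_realfun zify ring.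
Import Order.TTheory GRing.Theory Num.Theory.
Local Open Scope classical_set_scope.
Local Open Scope ring_scope.

(* The error of Q_t splits into three parts: the
   reward error, at most eps_t by (AP1); the error of V_{t+1} against
   Vhat_{t+1} o sigmahat_{t+1} inside the conditional expectation, at most
   alpha_{t+1} by induction; and the gap between integrating Vhat_{t+1}
   against the law of sigmahat_{t+1}(H_{t+1}) and against Phat_t.  Writing
   Vhat_{t+1} = r f with f in F, that gap is r times a term of d_F, hence at
   most rho_F(Vhat_{t+1}) delta_t by (AP2).  Averaging over actions with
   pihat_t, a convex combination, carries the Q bound over to V. *)

Lemma convex_comb_dist_le {R : realType} (A : finType) (p x y : A -> R)
    (e : \bar R) :
  (forall a, 0 <= p a) -> \sum_a p a = 1 -> (0 <= e)%E ->
  (forall a, (`|x a - y a|%:E <= e)%E) ->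
  (`|\sum_a p a * x a - \sum_a p a * y a|%:E <= e)%E.
Proof.
move=> p_ge0 p_sum1; case: e => [e | | //] e_ge0 xy_le; last by rewrite leey.
rewrite lee_fin -sumrB (le_trans (ler_norm_sum _ _ _)) //.
rewrite -[e]mul1r -p_sum1 mulr_suml ler_sum // => a _.
by rewrite -mulrBr normrM ger0_norm // ler_wpM2l // -lee_fin.
Qed.

Section probability_integrals.
Context {d : measure_display} {X : measurableType d} {R : realType}.
Variable P : probability X R.

Lemma bounded_measurable_integrable (f : X -> R) (M : R) :
  measurable_fun [set: X] f -> (forall x, `|f x| <= M) ->
  P.-integrable [set: X] (EFin \o f).
Proof.
move=> mf f_le; apply: (le_integrable measurableT _ _
  (finite_measure_integrable_cst P M measurableT)); first exact/measurable_EFinP.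
by move=> x _ /=; rewrite lee_fin (le_trans (f_le x)) // ler_norm.
Qed.

Lemma Rintegral_dist_le (f g : X -> R) (c : \bar R) :
  P.-integrable [set: X] (EFin \o f) -> P.-integrable [set: X] (EFin \o g) ->
  (0 <= c)%E -> (forall x, (`|f x - g x|%:E <= c)%E) ->
  (`|\int[P]_x f x - \int[P]_x g x|%:E <= c)%E.
Proof.
move=> If Ig; case: c => [c | | //] _ fg_le; last by rewrite leey.
have IfBg : P.-integrable [set: X] (EFin \o (fun x => f x - g x)).
  exact: eq_integrable measurableT _ _ _ (integrableB measurableT If Ig).
rewrite lee_fin -RintegralB // (le_trans (le_normr_Rintegral _ _)) //.
have Ic : P.-integrable [set: X] (EFin \o cst c).
  exact: finite_measure_integrable_cst.
apply: (@le_trans _ _ (\int[P]_x cst c x)).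
  apply: le_Rintegral => //; first exact: integrable_norm.
  by move=> x _; rewrite -lee_fin.
by rewrite Rintegral_cst // (congr1 fine (probability_setT P)) mulr1.
Qed.

End probability_integrals.

Section minkowski_ipm.
Context {d : measure_display} {Z : measurableType d}.
Context {R : realType} {F : set (Z -> R)}.
Hypothesis F_measurable : forall f, F f -> measurable_fun [set: Z] f.
Hypothesis F_bounded : exists M : R, forall f, F f -> forall z, `|f z| <= M.

Lemma minkowski_ge0 (g : Z -> R) : (0 <= Defs.minkowski F g)%E.
Proof. by apply/ereal_infP => _ [r [r_gt0 _] <-]; rewrite lee_fin ltW. Qed.

Lemma minkowski_lty {g : Z -> R} : (Defs.minkowski F g < +oo)%E ->
  exists2 r, 0 < r & F (fun z => r^-1 * g z).
Proof. by case/ereal_inf_lt => _ [r [r_gt0 Fr] <-] _; exists r. Qed.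

Lemma member_integrable {dX} {X : measurableType dX} (P : probability X R)
    {sig : X -> Z} {f : Z -> R} :
  measurable_fun [set: X] sig -> F f ->
  P.-integrable [set: X] (EFin \o (f \o sig)).
Proof.
move=> msig Ff; have [M F_le] := F_bounded.
apply: (@bounded_measurable_integrable _ _ _ _ _ M); last by move=> x; exact: F_le.
by apply: measurableT_comp msig; exact: F_measurable.
Qed.

Lemma scaled_member_integrable {dX} {X : measurableType dX}
    (P : probability X R) {sig : X -> Z} {g : Z -> R} {r : R} :
  measurable_fun [set: X] sig -> 0 < r -> F (fun z => r^-1 * g z) ->
  P.-integrable [set: X] (EFin \o (g \o sig)).
Proof.
move=> msig r_gt0 Fr.
have := integrableZl measurableT r (member_integrable P msig Fr).
apply: eq_integrable => // x _.
by rewrite /= -EFinM mulrA mulfV ?gt_eqF // mul1r.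
Qed.

Lemma Rintegral_comp_dist_le {dX} {X : measurableType dX}
    (mu : probability X R) (nu : probability Z R) (sig : X -> Z) (g : Z -> R)
    (delta : R) :
  measurable_fun [set: X] sig -> 0 < delta ->
  (ipm F (pushforward mu sig) nu <= delta%:E)%E ->
  (`|\int[mu]_x g (sig x) - \int[nu]_z g z|%:E
     <= Defs.minkowski F g * delta%:E)%E.
Proof.
move=> msig delta_gt0 ipm_le.
set D := `|_ - _|.
suff : ((D / delta)%:E <= Defs.minkowski F g)%E.
  have delta_ge0 : (0 <= delta%:E)%E by rewrite lee_fin ltW.
  by move/(lee_wpmul2r delta_ge0); rewrite -EFinM divfK ?gt_eqF.
apply/ereal_infP => _ [r [r_gt0 Fr] <-]; rewrite lee_fin ler_pdivrMr //.
set f := fun z => r^-1 * g z.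
have gE z : g z = r * f z by rewrite /f mulrA mulfV ?gt_eqF // mul1r.
have If_mu := member_integrable mu msig Fr.
have If_nu := member_integrable nu (@measurable_id _ _ setT) Fr.
have -> : D = r * `|\int[mu]_x f (sig x) - \int[nu]_z f z|.
  rewrite /D (eq_Rintegral _ (fun x _ => gE (sig x))).
  rewrite (eq_Rintegral _ (fun z _ => gE z)) (RintegralZl _ measurableT If_mu).
  by rewrite (RintegralZl _ measurableT If_nu) -mulrBr normrM gtr0_norm.
rewrite ler_pM2l // -lee_fin (le_trans _ ipm_le) //.
apply: ereal_sup_ubound; exists f => //.
rewrite (integral_pushforward msig) ?preimage_setT //; last first.
  exact/measurable_EFinP/F_measurable.
by rewrite -abse_EFin EFinB /Rintegral !fineK //; exact: integrable_fin_num.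
Qed.

Lemma bellman_step_dist_le {dX} {X : measurableType dX}
    (kap : probability X R) (P : probability Z R) (sig : X -> Z)
    (rew W : X -> R) (Vh : Z -> R) (rh eps delta : R) (a : \bar R) :
  measurable_fun [set: X] sig -> 0 < delta -> (0 <= a)%E ->
  kap.-integrable [set: X] (EFin \o rew) -> kap.-integrable [set: X] (EFin \o W) ->
  `|\int[kap]_x rew x - rh| <= eps ->
  (ipm F (pushforward kap sig) P <= delta%:E)%E ->
  (forall x, (`|W x - Vh (sig x)|%:E <= a)%E) ->
  (`|\int[kap]_x (rew x + W x) - (rh + \int[P]_z Vh z)|%:E
     <= eps%:E + Defs.minkowski F Vh * delta%:E + a)%E.
Proof.
move=> msig delta_gt0 a_ge0 Irew IW rew_le ipm_le W_le.
have [rho_fin | rho_inf] := ltP (Defs.minkowski F Vh) +oo%E; last first.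
  rewrite leye_eq in rho_inf; rewrite (eqP rho_inf) mulyr gtr0_sg // mul1e.
  by rewrite addey // addye ?leey // gt_eqF // (lt_le_trans _ a_ge0).
have [r r_gt0 Fr] := minkowski_lty rho_fin.
have IVh := scaled_member_integrable kap msig r_gt0 Fr.
set Erew := \int[kap]_x rew x; set EW := \int[kap]_x W x.
set EVh := \int[kap]_x Vh (sig x); set PVh := \int[P]_z Vh z.
rewrite RintegralD // -/Erew -/EW.
have -> : Erew + EW - (rh + PVh) = (Erew - rh) + (EVh - PVh) + (EW - EVh) by ring.
apply: (@le_trans _ _ (`|Erew - rh|%:E + `|EVh - PVh|%:E + `|EW - EVh|%:E)%E).
  by rewrite -!EFinD lee_fin (le_trans (ler_normD _ _)) // lerD // ler_normD.
rewrite !leeD ?lee_fin //; first exact: Rintegral_comp_dist_le.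
exact: Rintegral_dist_le.
Qed.

End minkowski_ipm.

Lemma alphak_ge0 {R : realType} {A : finType} {dZ : nat -> measure_display}
    {Z : forall t, measurableType (dZ t)}
    (Phat : forall t, Z t -> A -> probability (Z t.+1) R)
    (rhat pihat : forall t, Z t -> A -> R) (F : forall t, set (Z t -> R))
    (eps delta : nat -> R) (k t : nat) :
  (forall s, (t <= s < t + k)%N -> 0 <= eps s) ->
  (forall s, (t <= s < t + k)%N -> 0 <= delta s) ->
  (0 <= alphak Phat rhat pihat F eps delta k t)%E.
Proof.
elim: k t => [//|k IHk] t eps_ge0 delta_ge0 /=.
have t_in : (t <= t < t + k.+1)%N by lia.
rewrite !adde_ge0 ?mule_ge0 ?lee_fin ?eps_ge0 ?delta_ge0 ?minkowski_ge0 //.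
by apply: IHk => s s_in; [apply: eps_ge0 | apply: delta_ge0]; lia.
Qed.

Section approximate_information_state.
Context {R : realType} {T : nat} {A : finType}.
Context {dY : measure_display} {Y : measurableType dY}.
Context {kappa : nat -> seq (Y * A) -> A -> probability (Y * R)%type R}.
Context {dZ : nat -> measure_display} {Z : forall t, measurableType (dZ t)}.
Context {F : forall t, set (Z t -> R)} {eps delta : nat -> R}.
Context {sigmahat : forall t, seq (Y * A) -> Z t}.
Context {Phat : forall t, Z t -> A -> probability (Z t.+1) R}.
Context {rhat pihat : forall t, Z t -> A -> R}.

Local Notation pisharp := (fun t h a => pihat t (sigmahat t h) a).
Local Notation sig_next t h a :=
  (fun yr : Y * R => sigmahat t.+1 (rcons h (yr.1, a))).
Local Notation alpha t := (alphak Phat rhat pihat F eps delta (T.+1 - t) t).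
Local Notation Qerr t h a := (`|Qpi kappa pisharp (T - t) t h a
  - Qhat Phat rhat pihat (T - t) t (sigmahat t h) a|).
Local Notation Verr t h := (`|Vpi kappa pisharp (T.+1 - t) t h
  - Vhat Phat rhat pihat (T.+1 - t) t (sigmahat t h)|).

Hypothesis F_measurable : forall t f, F t f -> measurable_fun [set: Z t] f.
Hypothesis F_bounded :
  forall t, exists M : R, forall f, F t f -> forall z, `|f z| <= M.
Hypothesis eps_gt0 : forall t, (1 <= t <= T)%N -> 0 < eps t.
Hypothesis delta_gt0 : forall t, (1 <= t <= T)%N -> 0 < delta t.
Hypothesis pihat_ge0 : forall t z a, 0 <= pihat t z a.
Hypothesis pihat_sum1 : forall t z, \sum_(a : A) pihat t z a = 1.
Hypothesis sigmahat_measurable :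
  forall t, (1 <= t <= T)%N -> forall h, size h = t.-1 -> forall a,
  measurable_fun [set: (Y * R)%type] (sig_next t h a).
Hypothesis reward_integrable :
  forall t, (1 <= t <= T)%N -> forall h, size h = t.-1 -> forall a,
  (kappa t h a).-integrable [set: (Y * R)%type] (fun yr : Y * R => (yr.2)%:E).
Hypothesis value_integrable :
  forall t, (1 <= t <= T)%N -> forall h, size h = t.-1 -> forall a,
  (kappa t h a).-integrable [set: (Y * R)%type]
    (fun yr : Y * R => (Vpi kappa pisharp (T - t) t.+1 (rcons h (yr.1, a)))%:E).
Hypothesis AP1 :
  forall t, (1 <= t <= T)%N -> forall h, size h = t.-1 -> forall a,
  `|\int[kappa t h a]_yr yr.2 - rhat t (sigmahat t h) a| <= eps t.
Hypothesis AP2 :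
  forall t, (1 <= t <= T)%N -> forall h, size h = t.-1 -> forall a,
  (ipm (F t.+1) (pushforward (kappa t h a) (sig_next t h a))
     (Phat t (sigmahat t h) a) <= (delta t)%:E)%E.

Lemma alpha_ge0 t : (1 <= t)%N -> (0 <= alpha t)%E.
Proof.
move=> t_ge1; apply: alphak_ge0 => s s_in; apply/ltW.
  by apply: eps_gt0; lia.
by apply: delta_gt0; lia.
Qed.

Lemma Qerr_le t h a : (1 <= t <= T)%N -> size h = t.-1 ->
  (forall h', size h' = t -> ((Verr t.+1 h')%:E <= alpha t.+1)%E) ->
  ((Qerr t h a)%:E <= alpha t)%E.
Proof.
move=> t_in h_size V_le; have [t_ge1 t_le] := andP t_in.
rewrite subSn //=; apply: bellman_step_dist_le.
- exact: F_measurable.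
- exact: F_bounded.
- exact: (sigmahat_measurable _ t_in _ h_size).
- exact: delta_gt0.
- exact: alpha_ge0.
- exact: reward_integrable.
- exact: value_integrable.
- exact: AP1.
- exact: AP2.
- by move=> yr; apply: V_le; rewrite size_rcons h_size prednK.
Qed.

Lemma Verr_le t h : (1 <= t <= T)%N ->
  (forall a, ((Qerr t h a)%:E <= alpha t)%E) -> ((Verr t h)%:E <= alpha t)%E.
Proof.
move=> t_in Q_le; have [t_ge1 t_le] := andP t_in.
move: Q_le (alpha_ge0 t t_ge1); rewrite subSn //= => Q_le alpha_t_ge0.
exact: convex_comb_dist_le.
Qed.

Lemma Verr_le_all t h : (1 <= t <= T.+1)%N -> size h = t.-1 ->
  ((Verr t h)%:E <= alpha t)%E.
Proof.
move=> t_in; have [n Tt] : {n | (T.+1 - t = n)%N} by exists (T.+1 - t)%N.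
elim: n t h t_in Tt => [|n IHn] t h t_in Tt h_size.
  by rewrite Tt /= subrr normr0.
apply: Verr_le => [|a]; first lia.
apply: Qerr_le => // [|h' h'_size]; first lia.
apply: IHn => //; lia.
Qed.

Lemma approx_err_le t : (1 <= t <= T)%N -> forall h, size h = t.-1 -> forall a,
  ((Qerr t h a)%:E <= alpha t)%E /\ ((Verr t h)%:E <= alpha t)%E.
Proof.
move=> t_in h h_size a; split; last by apply: Verr_le_all => //; lia.
by apply: Qerr_le => // h' h'_size; apply: Verr_le_all => //; lia.
Qed.

End approximate_information_state.

Theorem mainTheorem3
  (R : realType) (T : nat) (A : finType)
  (dY : measure_display) (Y : measurableType dY)
  (kappa : nat -> seq (Y * A) -> A -> probability (Y * R)%type R)
  (dZ : nat -> measure_display) (Z : forall t, measurableType (dZ t))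
  (F : forall t, set (Z t -> R))
  (eps delta : nat -> R)
  (sigmahat : forall t, seq (Y * A) -> Z t)
  (Phat : forall t, Z t -> A -> probability (Z t.+1) R)
  (rhat : forall t, Z t -> A -> R)
  (pihat : forall t, Z t -> A -> R)
  (* the class F consists of uniformly bounded measurable functions *)
  (hFmeas : forall t f, F t f -> measurable_fun [set: Z t] f)
  (hFbd : forall t, exists M : R, forall f, F t f -> forall z, `|f z| <= M)
  (heps : forall t, (1 <= t <= T)%N -> 0 < eps t)
  (hdelta : forall t, (1 <= t <= T)%N -> 0 < delta t)
  (* pihat_t(. | z) is a probability distribution on A *)
  (hpi0 : forall t z a, 0 <= pihat t z a)
  (hpi1 : forall t z, \sum_(a : A) pihat t z a = 1)
  (* well-definedness: sigmahat_{t+1}(H_{t+1}) is a random variable *)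
  (hsig : forall t, (1 <= t <= T)%N -> forall h, size h = t.-1 -> forall a,
     measurable_fun [set: (Y * R)%type] (fun yr : Y * R => sigmahat t.+1 (rcons h (yr.1, a))))
  (* well-definedness of the (conditional) expectations *)
  (hRint : forall t, (1 <= t <= T)%N -> forall h, size h = t.-1 -> forall a,
     (kappa t h a).-integrable [set: (Y * R)%type] (fun yr : Y * R => (yr.2)%:E))
  (hVint : forall t, (1 <= t <= T)%N -> forall h, size h = t.-1 -> forall a,
     (kappa t h a).-integrable [set: (Y * R)%type]
       (fun yr : Y * R => (Vpi kappa (fun t h a => pihat t (sigmahat t h) a)
                              (T - t) t.+1 (rcons h (yr.1, a)))%:E))
  (hVhint : forall t, (1 <= t <= T)%N -> forall z a,
     (Phat t z a).-integrable [set: Z t.+1]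
       (fun z' => (Vhat Phat rhat pihat (T - t) t.+1 z')%:E))
  (* (AP1) *)
  (AP1 : forall t, (1 <= t <= T)%N -> forall h, size h = t.-1 -> forall a,
     `| fine (\int[kappa t h a]_yr ((yr : Y * R).2)%:E) - rhat t (sigmahat t h) a | <= eps t)
  (* (AP2) *)
  (AP2 : forall t, (1 <= t <= T)%N -> forall h, size h = t.-1 -> forall a,
     (ipm (F t.+1)
        (pushforward (kappa t h a) (fun yr : Y * R => sigmahat t.+1 (rcons h (yr.1, a))))
        (Phat t (sigmahat t h) a) <= (delta t)%:E)%E) :
  let pisharp := fun t h a => pihat t (sigmahat t h) a in
  let alpha := fun t => alphak Phat rhat pihat F eps delta (T.+1 - t) t in
  forall t, (1 <= t <= T)%N -> forall h, size h = t.-1 -> forall a,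
    ((`| Qpi kappa pisharp (T - t) t h a
         - Qhat Phat rhat pihat (T - t) t (sigmahat t h) a |)%:E <= alpha t)%E /\
    ((`| Vpi kappa pisharp (T.+1 - t) t h
         - Vhat Phat rhat pihat (T.+1 - t) t (sigmahat t h) |)%:E <= alpha t)%E.
Proof.
exact: (approx_err_le hFmeas hFbd heps hdelta hpi0 hpi1 hsig hRint hVint AP1 AP2).
Qed.
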